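(* Let $\mathcal{H}=\bigotimes_{i=1}^n\mathbb{C}^{d_i}$, let $|\psi\rangle\in\mathcal{H}$ be a fully entangled pure state, and let $g=g_1\otimes\cdots\otimes g_n$ and $h=h_1\otimes\cdots\otimes h_n$ with $g_i,h_i\in GL(d_i,\mathbb{C})$. Put $G=g^\dagger g$, $H=h^\dagger h$ and $r=\|h|\psi\rangle\|^2/\|g|\psi\rangle\|^2$. Then the state $g|\psi\rangle$ can be transformed into the state $h|\psi\rangle$ via SEP if and only if there exist a finite set of probabilities $p_k\ge 0$ with $\sum_k p_k=1$, symmetries $\{S_k\}_k\subseteq\mathcal{S}_\psi$, and finitely many local matrices $N_q\in\mathcal{N}_{g\psi}$ such that $$\frac{1}{r}\sum_k p_k S_k^\dagger H S_k+g^\dagger\Big(\sum_q N_q^\dagger N_q\Big)g=G.$$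
   Context: A pure state $|\psi\rangle\in\bigotimes_{i=1}^n\mathbb{C}^{d_i}$ is fully entangled if each single-party reduced density matrix $\rho_i$ has rank $d_i$. A CPTP map $\Lambda$ on $\mathcal{B}(\mathcal{H})$ is in SEP if it has a Kraus decomposition $\Lambda(X)=\sum_i K_iXK_i^\dagger$, $\sum_i K_i^\dagger K_i=\mathbb{1}$, with every $K_i=\bigotimes_{j=1}^n K_i^{(j)}$, $K_i^{(j)}\in M(d_j,\mathbb{C})$. A (possibly unnormalized) state $|\alpha\rangle$ can be transformed into $|\beta\rangle$ via a class of maps if some map $\Lambda$ in the class satisfies $\Lambda(|\alpha\rangle\langle\alpha|/\langle\alpha|\alpha\rangle)=|\beta\rangle\langle\beta|/\langle\beta|\beta\rangle$. The stabilizer $\mathcal{S}_\psi$ is the set of operators $S=S^{(1)}\otimes\cdots\otimes S^{(n)}$ with $S^{(i)}\in GL(d_i,\mathbb{C})$ and $S|\psi\rangle=|\psi\rangle$. For a vector $|\chi\rangle$, $\mathcal{N}_{\chi}$ is the set of operators $N=N^{(1)}\otimes\cdots\otimes N^{(n)}$ with $N^{(i)}\in M(d_i,\mathbb{C})$ and $N|\chi\rangle=0$; here $\mathcal{N}_{g\psi}$ refers to $|\chi\rangle=g|\psi\rangle$. *)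

From mathcomp Require Import all_boot all_algebra.
From mathcomp Require Import complex reals.
Set Implicit Arguments. Unset Strict Implicit. Unset Printing Implicit Defensive.
Import GRing.Theory Num.Theory.
Local Open Scope ring_scope.

Section QI.
Variable R : realType.
Local Notation C := R[i].
Variable n : nat.
Variable d : 'I_n -> nat.

(* Basis of H = (x)_i C^{d_i}: multi-indices x with x i : 'I_(d i). *)
Definition Idx := {dffun forall i : 'I_n, 'I_(d i)}.
(* dim H = #|Idx| = prod_i d_i ; vectors are 'cV_dimH, operators 'M_dimH. *)
Definition dimH := #|{: Idx}|.

Definition adj (m p : nat) (A : 'M[C]_(m, p)) : 'M[C]_(p, m) :=
  (map_mx Num.conj A)^T.

Definition ktensor (K : forall i : 'I_n, 'M[C]_(d i)) : 'M[C]_dimH :=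
  \matrix_(a, b) \prod_(i : 'I_n)
      K i ((enum_val a : Idx) i) ((enum_val b : Idx) i).

Definition nrm2 (v : 'cV[C]_dimH) : C := (adj v *m v) 0 0.

Definition density (v : 'cV[C]_dimH) : 'M[C]_dimH :=
  (nrm2 v)^-1 *: (v *m adj v).

(* single-party reduced density matrix rho_i = Tr_{not i} |psi><psi| *)
Definition rho (psi : 'cV[C]_dimH) (i : 'I_n) : 'M[C]_(d i) :=
  \matrix_(a, b) \sum_(x : Idx | x i == a) \sum_(y : Idx | y i == b)
     (if [forall j : 'I_n, (j != i) ==> (x j == y j)]
      then psi (enum_rank x) 0 * Num.conj (psi (enum_rank y) 0) else 0).

Definition fully_entangled (psi : 'cV[C]_dimH) : Prop :=
  forall i : 'I_n, \rank (rho psi i) = d i.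

(* transformation of (unnormalized) alpha into beta via a SEP map *)
Definition SEP_transform (alpha beta : 'cV[C]_dimH) : Prop :=
  exists (m : nat) (K : 'I_m -> forall i : 'I_n, 'M[C]_(d i)),
    \sum_(k < m) adj (ktensor (K k)) *m ktensor (K k) = 1%:M /\
    \sum_(k < m) ktensor (K k) *m density alpha *m adj (ktensor (K k))
      = density beta.

Definition in_stabilizer (psi : 'cV[C]_dimH) (S : forall i : 'I_n, 'M[C]_(d i))
  : Prop :=
  (forall i, S i \in unitmx) /\ ktensor S *m psi = psi.

Definition in_annihilator (chi : 'cV[C]_dimH) (N : forall i : 'I_n, 'M[C]_(d i))
  : Prop :=
  ktensor N *m chi = 0.

End QI.

(* A SEP map with product Kraus operators [K_k] sends the pure state
   [v = g psi] to the pure state [w = h psi] iff [sum_k (K_k v)(K_k v)^*] is a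
   multiple of [w w^*], i.e. iff every [K_k v] equals [gam_k w], with
   [sum_k |gam_k|^2 = |v|^2 / |w|^2].  When [gam_k != 0] the product operator
   [gam_k^-1 h^-1 K_k g] fixes [psi], and its local factors are invertible
   because [psi] is fully entangled; when [gam_k = 0], [K_k] annihilates [v].
   Conjugating the completeness relation [sum_k K_k^* K_k = 1] by [g] gives
   the identity with [p_k = r |gam_k|^2].  Conversely the operators
   [sqrt (p_k / r) h S_k g^-1], together with the [N_q], form a Kraus family
   performing the transformation. *)

From mathcomp Require Import all_boot all_order all_algebra.
From mathcomp Require Import complex reals.
Set Implicit Arguments.
Unset Strict Implicit.
Unset Printing Implicit Defensive.
Import Order.TTheory GRing.Theory Num.Theory.
Local Open Scope ring_scope.

Lemma sum_split_ord (V : nmodType) (T : Type) m l (F : T -> V)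
    (A : 'I_m -> T) (B : 'I_l -> T) :
  \sum_(t < m + l) F (match split t with inl k => A k | inr q => B q end) =
  \sum_(k < m) F (A k) + \sum_(q < l) F (B q).
Proof.
rewrite big_split_ord; congr (_ + _); apply: eq_bigr => k _.
  by rewrite (unsplitK (inl _ k)).
by rewrite (unsplitK (inr _ k)).
Qed.

Section Adjoint.
Variable R : realType.
Local Notation C := R[i].

Lemma adjmxE m p (A : 'M[C]_(m, p)) i j : adj A i j = (A j i)^*.
Proof. by rewrite !mxE. Qed.

Lemma adjmxM m p q (A : 'M[C]_(m, p)) (B : 'M[C]_(p, q)) :
  adj (A *m B) = adj B *m adj A.
Proof. by rewrite /adj map_mxM trmx_mul. Qed.

Lemma adjmxZ m p c (A : 'M[C]_(m, p)) : adj (c *: A) = c^* *: adj A.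
Proof. by rewrite /adj map_mxZ linearZ. Qed.

Lemma adjmx1 m : adj (1%:M : 'M[C]_m) = 1%:M.
Proof. by rewrite /adj map_mx1 trmx1. Qed.

Lemma gramM m p q (A : 'M[C]_(m, p)) (B : 'M[C]_(p, q)) :
  adj (A *m B) *m (A *m B) = adj B *m (adj A *m A) *m B.
Proof. by rewrite adjmxM !mulmxA. Qed.

Definition inner m (x y : 'cV[C]_m) : C := (adj x *m y) 0 0.

Lemma innerE m (x y : 'cV[C]_m) : inner x y = \sum_i (x i 0)^* * y i 0.
Proof. by rewrite /inner !mxE; apply: eq_bigr => i _; rewrite adjmxE. Qed.

Lemma inner_conj m (x y : 'cV[C]_m) : inner y x = (inner x y)^*.
Proof.
rewrite !innerE rmorph_sum; apply: eq_bigr => i _.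
by rewrite rmorphM /= conjCK mulrC.
Qed.

Lemma innerZr m c (x y : 'cV[C]_m) : inner x (c *: y) = c * inner x y.
Proof. by rewrite /inner -scalemxAr mxE. Qed.

Lemma innerBr m (x y z : 'cV[C]_m) : inner x (y - z) = inner x y - inner x z.
Proof. by rewrite /inner mulmxBr !mxE. Qed.

Lemma inner0r m (x : 'cV[C]_m) : inner x 0 = 0.
Proof. by rewrite /inner mulmx0 mxE. Qed.

Lemma inner_sumr m k (x : 'cV[C]_m) (u : 'I_k -> 'cV[C]_m) :
  inner x (\sum_(j < k) u j) = \sum_(j < k) inner x (u j).
Proof. by rewrite /inner mulmx_sumr summxE. Qed.

Lemma inner_ge0 m (x : 'cV[C]_m) : 0 <= inner x x.
Proof. by rewrite innerE sumr_ge0 // => i _; rewrite mulrC mul_conjC_ge0. Qed.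

Lemma inner_eq0 m (x : 'cV[C]_m) : (inner x x == 0) = (x == 0).
Proof.
apply/idP/eqP => [|->]; last by rewrite inner0r.
rewrite innerE psumr_eq0 => [/allP x0|i _]; last by rewrite mulrC mul_conjC_ge0.
apply/matrixP => i j; rewrite ord1 mxE; apply/eqP.
by rewrite -mul_conjC_eq0 mulrC; apply: x0; rewrite mem_index_enum.
Qed.

Lemma inner_gt0 m (x : 'cV[C]_m) : (0 < inner x x) = (x != 0).
Proof. by rewrite lt_def inner_ge0 inner_eq0 andbT. Qed.

Lemma mulmx_outer m (x y z : 'cV[C]_m) : x *m adj y *m z = inner y z *: x.
Proof. by rewrite -mulmxA [adj y *m z]mx11_scalar mul_mx_scalar. Qed.

Lemma outer_sum_colinear k m (vs : 'I_k -> 'cV[C]_m) (a : C) (w : 'cV[C]_m) :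
  w != 0 -> \sum_j vs j *m adj (vs j) = a *: (w *m adj w) ->
  forall j, vs j = (inner w (vs j) / inner w w) *: w.
Proof.
(* [P := vs j - c w] is orthogonal to [w], so the positive operator
   [sum_i vs i vs i^*] kills it; hence every [vs i], in particular [vs j],
   is orthogonal to [P], and then so is [P] itself. *)
move=> w0 E j; set c := _ / _; set P := vs j - c *: w.
have wP : inner w P = 0 by rewrite innerBr innerZr divfK ?subrr // inner_eq0.
have sum0 : \sum_i inner (vs i) P * (inner (vs i) P)^* = 0.
  transitivity (inner P ((\sum_i vs i *m adj (vs i)) *m P)).
    rewrite mulmx_suml inner_sumr; apply: eq_bigr => l _.
    by rewrite mulmx_outer innerZr (inner_conj (vs l)).
  by rewrite E -scalemxAl mulmx_outer wP scale0r scaler0 inner0r.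
have vP : inner (vs j) P = 0.
  apply/eqP; rewrite -mul_conjC_eq0; apply/eqP.
  by apply: (psumr_eq0P _ sum0) => // i _; apply: mul_conjC_ge0.
apply/eqP; rewrite -subr_eq0 -/P -inner_eq0 {2}/P innerBr innerZr.
by rewrite (inner_conj (vs j)) (inner_conj w) vP wP conjC0 mulr0 subr0.
Qed.

Lemma outer_sum_coef k m (vs : 'I_k -> 'cV[C]_m) (gam : 'I_k -> C) (a : C)
    (w : 'cV[C]_m) :
  w != 0 -> (forall j, vs j = gam j *: w) ->
  \sum_j vs j *m adj (vs j) = a *: (w *m adj w) ->
  \sum_j gam j * (gam j)^* = a.
Proof.
move=> w0 vsE.
under eq_bigr do rewrite vsE adjmxZ -scalemxAl -scalemxAr scalerA.
move/(congr1 (fun M => inner w (M *m w))).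
rewrite -scaler_suml -!scalemxAl mulmx_outer !innerZr; apply: mulIf.
by rewrite mulf_neq0 // inner_eq0.
Qed.
End Adjoint.

Section Tensor.
Variable R : realType.
Local Notation C := R[i].
Variables (n : nat) (d : 'I_n -> nat).
Implicit Types A B : forall i : 'I_n, 'M[C]_(d i).

Lemma sum_dimH (F : 'I_(dimH d) -> C) :
  \sum_(c < dimH d) F c = \sum_(x : Idx d) F (enum_rank x).
Proof.
rewrite (reindex enum_rank) //.
by exists enum_val => x; rewrite ?enum_rankK ?enum_valK.
Qed.

Lemma prod_sum_Idx (F : forall i : 'I_n, 'I_(d i) -> C) :
  \prod_i \sum_(j : 'I_(d i)) F i j = \sum_(x : Idx d) \prod_i F i (x i).
Proof.
pose T_ : 'I_n -> finType := fun i => 'I_(d i).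
pose P_ i := [ffun j : T_ i => F i j].
transitivity (\prod_i \sum_(j : T_ i) P_ i j).
  by apply: eq_bigr => i _; apply: eq_bigr => j _; rewrite ffunE.
under eq_bigr => i _ do rewrite (big_tag (fun i => P_ i) i).
rewrite bigA_distr_big_dep -(@big_fprod C 0 1 *%R +%R _ T_ P_).
rewrite (reindex (@fprod_of_dffun _ T_)); last first.
  exists (@dffun_of_fprod _ T_) => x.
    by rewrite fprod_of_dffunK.
  by rewrite dffun_of_fprodK.
by apply: eq_bigr => x _; apply: eq_bigr => i _; rewrite fprodE ffunE.
Qed.

Lemma eq_ktensor A B : (forall i, A i = B i) -> ktensor A = ktensor B.
Proof.
move=> AB; apply/matrixP => a b; rewrite !mxE.
by apply: eq_bigr => i _; rewrite AB.
Qed.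

Lemma ktensorM A B : ktensor A *m ktensor B = ktensor (fun i => A i *m B i).
Proof.
apply/matrixP => a b; rewrite !mxE sum_dimH.
under [RHS]eq_bigr do rewrite mxE.
rewrite prod_sum_Idx; apply: eq_bigr => x _.
by rewrite !mxE enum_rankK -big_split.
Qed.

Lemma ktensor1 : ktensor (fun i => 1%:M : 'M[C]_(d i)) = 1%:M.
Proof.
apply/matrixP => a b; rewrite !mxE.
have [<-|neq_ab] := eqVneq a b.
  by rewrite big1 // => i _; rewrite mxE eqxx.
have [i neq_i|eq_ab] := pickP (fun i => enum_val a i != enum_val b i).
  by rewrite (bigD1 i) //= mxE (negbTE neq_i) mul0r.
case/eqP: neq_ab; apply/enum_val_inj/ffunP => i.
by apply/eqP; move/negbFE: (eq_ab i).
Qed.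

Lemma ktensor_eq0 A i : A i = 0 -> ktensor A = 0.
Proof.
by move=> Ai0; apply/matrixP => a b; rewrite !mxE (bigD1 i) //= Ai0 mxE mul0r.
Qed.

Lemma ktensor_dfwithZ A i (c : C) :
  ktensor (dfwith A (c *: A i)) = c *: ktensor A.
Proof.
apply/matrixP => a b; rewrite !mxE (bigD1 i) //= dfwith_in mxE.
rewrite [in RHS](bigD1 i) //= mulrA; congr (_ * _).
by apply: eq_bigr => j ji; rewrite dfwith_out // eq_sym.
Qed.

Lemma ktensor_unitmx A : (forall i, A i \in unitmx) ->
  ktensor A \in unitmx /\ invmx (ktensor A) = ktensor (fun i => invmx (A i)).
Proof.
move=> Aunit; have AV : ktensor A *m ktensor (fun i => invmx (A i)) = 1%:M.
  by rewrite ktensorM -ktensor1; apply: eq_ktensor => i; rewrite mulmxV.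
have [Au _] := mulmx1_unit AV; split=> //.
by rewrite -[LHS]mulmx1 -AV mulKmx.
Qed.

Lemma ktensor_nil A : n = 0%N -> ktensor A = 1%:M.
Proof.
move=> n0; have no_party (i : 'I_n) : False by case: i => i; rewrite n0.
apply/matrixP => a b; rewrite !mxE big_pred0 => [|i]; last by case: no_party.
suff -> : a = b by rewrite eqxx.
by apply/enum_val_inj/ffunP => i; case: no_party.
Qed.

End Tensor.

Section Entanglement.
Variable R : realType.
Local Notation C := R[i].
Variables (n : nat) (d : 'I_n -> nat) (psi : 'cV[C]_(dimH d)).

Definition row_local i (u : 'rV[C]_(d i)) : forall j : 'I_n, 'M[C]_(d j) :=
  @dfwith _ (fun j => 'M[C]_(d j)) (fun j => 1%:M) i (const_mx 1 *m u).

Lemma row_local_prod i u (x y : Idx d) :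
  \prod_j row_local u j (y j) (x j) =
    u 0 (x i) * [forall j, (j != i) ==> (x j == y j)]%:R.
Proof.
rewrite /row_local (bigD1 i) //= dfwith_in !mxE big_ord1 mxE mul1r.
congr (_ * _).
case: (boolP [forall j, _ ==> _]) => [/forallP eq_xy | /forallPn [j]].
  apply: big1 => j ji; rewrite dfwith_out 1?eq_sym // mxE.
  by rewrite (eqP (implyP (eq_xy j) ji)) eqxx.
rewrite negb_imply => /andP [ji neq_xy].
rewrite (bigD1 j) //= dfwith_out 1?eq_sym // mxE eq_sym (negbTE neq_xy).
by rewrite mul0r.
Qed.

Lemma mul_rho i (u : 'rV[C]_(d i)) b :
  (u *m rho psi i) 0 b = \sum_(y : Idx d | y i == b)
    (ktensor (row_local u) *m psi) (enum_rank y) 0 * (psi (enum_rank y) 0)^*.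
Proof.
rewrite mxE; transitivity (\sum_(x : Idx d) \sum_(y : Idx d | y i == b)
    u 0 (x i) * (if [forall j, (j != i) ==> (x j == y j)]
                 then psi (enum_rank x) 0 * (psi (enum_rank y) 0)^* else 0)).
  rewrite [RHS](partition_big (fun x : Idx d => x i) predT) //=.
  apply: eq_bigr => a _; rewrite mxE big_distrr /=.
  by apply: eq_bigr => x /eqP ->; rewrite big_distrr.
rewrite exchange_big /=; apply: eq_bigr => y _.
rewrite mxE sum_dimH big_distrl /=; apply: eq_bigr => x _.
rewrite !mxE !enum_rankK row_local_prod.
by case: ifP; rewrite ?mulr1 ?mulr0 ?mul0r // mulrA.
Qed.

Lemma in_stabilizer1 : in_stabilizer psi (fun j => 1%:M).
Proof. by split=> [j|]; [exact: unitmx1 | rewrite ktensor1 mul1mx]. Qed.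

(* A row vector [u] with [u A_i = 0] annihilates every slice of [psi = A psi]
   along party [i], so [u rho_i = 0]; full rank of [rho_i] forces [u = 0]. *)
Lemma fully_entangled_in_stabilizer (A : forall i : 'I_n, 'M[C]_(d i)) :
  fully_entangled psi -> ktensor A *m psi = psi -> in_stabilizer psi A.
Proof.
move=> FE Apsi; split=> // i; rewrite unitmxE unitfE.
apply/negP => /det0P [u u0 uA].
have Bpsi : ktensor (row_local u) *m psi = 0.
  rewrite -Apsi mulmxA ktensorM (@ktensor_eq0 _ _ _ _ i) ?mul0mx //.
  by rewrite /row_local dfwith_in -mulmxA uA mulmx0.
have rho_unit : rho psi i \in unitmx by rewrite -row_free_unit /row_free FE.
suff uR : u *m rho psi i = 0.
  by rewrite -(mulmxK rho_unit u) uR mul0mx eqxx in u0.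
apply/rowP => b; rewrite mul_rho mxE big1 // => y _.
by rewrite Bpsi mxE mul0r.
Qed.

End Entanglement.

Section Density.
Variable R : realType.
Local Notation C := R[i].
Variables (n : nat) (d : 'I_n -> nat).
Local Notation V := 'cV[C]_(dimH d).

Lemma nrm2_gt0 (v : V) : (0 < nrm2 v) = (v != 0).
Proof. exact: inner_gt0. Qed.

Lemma mul_density (K : 'M[C]_(dimH d)) (v : V) :
  K *m density v *m adj K = (nrm2 v)^-1 *: ((K *m v) *m adj (K *m v)).
Proof. by rewrite /density -scalemxAr -scalemxAl adjmxM !mulmxA. Qed.

Lemma sum_mul_densityE m (K : 'I_m -> 'M[C]_(dimH d)) (v w : V) :
  v != 0 -> w != 0 ->
  (\sum_k K k *m density v *m adj (K k) = density w) <->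
  \sum_k (K k *m v) *m adj (K k *m v) = (nrm2 v / nrm2 w) *: (w *m adj w).
Proof.
rewrite -!nrm2_gt0 => /lt0r_neq0 v0 /lt0r_neq0 w0.
under eq_bigr do rewrite mul_density.
rewrite -scaler_sumr /density; split=> [E | ->].
  by rewrite -[LHS]scale1r -(divff v0) -[in LHS]scalerA E scalerA.
by rewrite scalerA mulrA mulVf ?mul1r.
Qed.

Lemma SEP_transform_refl (v : V) : SEP_transform v v.
Proof.
exists 1%N, (fun _ _ => 1%:M); rewrite !big_ord1 ktensor1 adjmx1 !mul1mx.
by split=> //; rewrite mulmx1.
Qed.

End Density.

Section Decomposition.
Variable R : realType.
Local Notation C := R[i].
Variables (n : nat) (d : 'I_n -> nat) (psi : 'cV[C]_(dimH d)).
Variables gl hl : forall j : 'I_n, 'M[C]_(d j).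
Hypotheses (psi0 : psi != 0) (gU : forall j, gl j \in unitmx)
  (hU : forall j, hl j \in unitmx).

Local Notation g := (ktensor gl).
Local Notation h := (ktensor hl).
Local Notation v := (g *m psi).
Local Notation w := (h *m psi).

Definition stabilizer_decomposition : Prop :=
  exists (m : nat) (p : 'I_m -> C) (S : 'I_m -> forall j : 'I_n, 'M[C]_(d j))
         (l : nat) (N : 'I_l -> forall j : 'I_n, 'M[C]_(d j)),
    (forall k, 0 <= p k) /\ \sum_(k < m) p k = 1 /\
    (forall k, in_stabilizer psi (S k)) /\
    (forall q, in_annihilator v (N q)) /\
    (nrm2 w / nrm2 v)^-1 *:
      (\sum_(k < m) p k *:
         (adj (ktensor (S k)) *m (adj h *m h) *m ktensor (S k)))
    + adj g *m (\sum_(q < l) adj (ktensor (N q)) *m ktensor (N q)) *m g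
    = adj g *m g.

Let g_unit : g \in unitmx := (ktensor_unitmx gU).1.
Let h_unit : h \in unitmx := (ktensor_unitmx hU).1.

Let v_neq0 : v != 0.
Proof.
by apply: contraNneq psi0 => v0; rewrite -(mulKmx g_unit psi) v0 mulmx0.
Qed.

Let w_neq0 : w != 0.
Proof.
by apply: contraNneq psi0 => w0; rewrite -(mulKmx h_unit psi) w0 mulmx0.
Qed.

Lemma stabilizer_decomposition_nil : n = 0%N -> stabilizer_decomposition.
Proof.
move=> n0.
exists 1%N, (fun _ => 1), (fun _ j => 1%:M), 0%N, (fun _ j => 1%:M).
rewrite !ktensor_nil // !big_ord1 big_ord0 mulmx0 mul0mx addr0 adjmx1 !mul1mx.
rewrite divff ?invr1 ?scale1r ?lt0r_neq0 ?nrm2_gt0 //.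
split=> //; split=> //; split=> [k|]; first exact: in_stabilizer1.
by split=> //; case.
Qed.

(* Scalars are absorbed into a product operator through the factor of some
   party [i0]; without parties every product operator is the 1x1 identity. *)
Section NonemptyParties.
Variable i0 : 'I_n.

(* For a Kraus operator with [K v = c w]: if [c != 0] then [c^-1 h^-1 K g]
   fixes [psi], and if [c = 0] then [K] annihilates [v]. *)
Definition stabilizer_part (K : forall j : 'I_n, 'M[C]_(d j)) (c : C) :
    forall j : 'I_n, 'M[C]_(d j) :=
  if c == 0 then fun j => 1%:M
  else dfwith (fun j => invmx (hl j) *m K j *m gl j)
              (c^-1 *: (invmx (hl i0) *m K i0 *m gl i0)).

Definition annihilator_part (K : forall j : 'I_n, 'M[C]_(d j)) (c : C) :
    forall j : 'I_n, 'M[C]_(d j) :=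
  if c == 0 then K else fun j => 0.

Lemma stabilizer_partE K c : c != 0 ->
  ktensor (stabilizer_part K c) = c^-1 *: (invmx h *m ktensor K *m g).
Proof.
move=> c0; rewrite /stabilizer_part (negbTE c0) ktensor_dfwithZ.
by rewrite (ktensor_unitmx hU).2 !ktensorM.
Qed.

Lemma stabilizer_part_in_stabilizer K c : fully_entangled psi ->
  ktensor K *m v = c *: w -> in_stabilizer psi (stabilizer_part K c).
Proof.
move=> FE Kv; have [->|c0] := eqVneq c 0.
  by rewrite /stabilizer_part eqxx; apply: in_stabilizer1.
apply: fully_entangled_in_stabilizer => //.
rewrite stabilizer_partE // -scalemxAl -!mulmxA Kv -scalemxAr mulKmx //.
by rewrite scalerA mulVf // scale1r.
Qed.

Lemma annihilator_part_in_annihilator K c :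
  ktensor K *m v = c *: w -> in_annihilator v (annihilator_part K c).
Proof.
rewrite /in_annihilator /annihilator_part => Kv; case: eqP => [c0|_].
  by rewrite Kv c0 scale0r.
by rewrite (@ktensor_eq0 _ _ _ _ i0) ?mul0mx.
Qed.

Lemma gram_stabilizer_part K c :
  c * c^* *: (adj (ktensor (stabilizer_part K c)) *m (adj h *m h)
                *m ktensor (stabilizer_part K c))
  + adj g *m (adj (ktensor (annihilator_part K c))
                *m ktensor (annihilator_part K c)) *m g
  = adj g *m (adj (ktensor K) *m ktensor K) *m g.
Proof.
have [->|c0] := eqVneq c 0.
  by rewrite /annihilator_part eqxx mul0r scale0r add0r.
rewrite /annihilator_part (negbTE c0) (@ktensor_eq0 _ _ _ (fun j => 0) i0) //.
rewrite mulmx0 mulmx0 mul0mx addr0 stabilizer_partE // adjmxZ.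
rewrite -!scalemxAl -scalemxAr !scalerA fmorphV mulfK ?conjC_eq0 //.
rewrite divff // scale1r -[LHS]gramM -[invmx h *m _ *m g]mulmxA mulKVmx //.
exact: gramM.
Qed.

Lemma SEP_transform_decomposition :
  fully_entangled psi -> SEP_transform v w -> stabilizer_decomposition.
Proof.
move=> FE [m [K [sumK]]]; rewrite sum_mul_densityE // => E.
pose gam k := inner w (ktensor (K k) *m v) / inner w w.
have Kv k : ktensor (K k) *m v = gam k *: w := outer_sum_colinear w_neq0 E k.
have sum_gam : \sum_k gam k * (gam k)^* = nrm2 v / nrm2 w :=
  outer_sum_coef w_neq0 Kv E.
pose r := nrm2 w / nrm2 v.
have r_gt0 : 0 < r by rewrite divr_gt0 ?nrm2_gt0.
exists m, (fun k => r * (gam k * (gam k)^*)),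
  (fun k => stabilizer_part (K k) (gam k)),
  m, (fun k => annihilator_part (K k) (gam k)).
split; first by move=> k; rewrite mulr_ge0 ?mul_conjC_ge0 ?ltW.
split.
  by rewrite -mulr_sumr sum_gam -[nrm2 v / _]invf_div mulfV ?lt0r_neq0.
split; first by move=> k; apply: stabilizer_part_in_stabilizer.
split; first by move=> k; apply: annihilator_part_in_annihilator.
rewrite -[in RHS](mulmx1 (adj g)) -sumK mulmx_sumr mulmx_suml.
rewrite scaler_sumr mulmx_sumr mulmx_suml -big_split; apply: eq_bigr => k _.
by rewrite scalerA mulKf ?lt0r_neq0 //; apply: gram_stabilizer_part.
Qed.

Definition kraus_of_stabilizer (c : C) (S : forall j : 'I_n, 'M[C]_(d j)) :
    forall j : 'I_n, 'M[C]_(d j) :=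
  dfwith (fun j => hl j *m S j *m invmx (gl j))
         (c *: (hl i0 *m S i0 *m invmx (gl i0))).

Lemma kraus_of_stabilizerE c S :
  ktensor (kraus_of_stabilizer c S) = c *: (h *m ktensor S *m invmx g).
Proof.
by rewrite /kraus_of_stabilizer ktensor_dfwithZ (ktensor_unitmx gU).2 !ktensorM.
Qed.

Lemma kraus_of_stabilizer_mul c S :
  in_stabilizer psi S -> ktensor (kraus_of_stabilizer c S) *m v = c *: w.
Proof.
move=> [_ Spsi]; rewrite kraus_of_stabilizerE -scalemxAl -!mulmxA.
by rewrite mulKmx // Spsi.
Qed.

Lemma decomposition_SEP_transform :
  stabilizer_decomposition -> SEP_transform v w.
Proof.
move=> [m [p [S [l [N [p_ge0 [sum_p [Sst [Nann E]]]]]]]]].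
pose r := nrm2 w / nrm2 v.
have r_gt0 : 0 < r by rewrite divr_gt0 ?nrm2_gt0.
pose c k := sqrtC (p k / r).
have cc k : c k * (c k)^* = p k / r.
  have pr_ge0 : 0 <= p k / r := divr_ge0 (p_ge0 k) (ltW r_gt0).
  by rewrite geC0_conj ?sqrtC_ge0 // -expr2 sqrtCK.
exists (m + l)%N, (fun t => match split t with
  | inl k => kraus_of_stabilizer (c k) (S k) | inr q => N q end).
split.
  have /= -> := sum_split_ord (fun K => adj (ktensor K) *m ktensor K)
    (fun k => kraus_of_stabilizer (c k) (S k)) N.
  transitivity (adj (invmx g) *m (adj g *m g) *m invmx g); last first.
    by rewrite -gramM mulmxV // adjmx1 mul1mx.
  rewrite -[in RHS]E mulmxDr mulmxDl; congr (_ + _).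
    rewrite scaler_sumr mulmx_sumr mulmx_suml; apply: eq_bigr => k _.
    rewrite kraus_of_stabilizerE adjmxZ -scalemxAl -scalemxAr scalerA mulrC cc.
    by rewrite !gramM scalerA -[in RHS]scalemxAr -[in RHS]scalemxAl mulrC.
  by rewrite !mulmxA -adjmxM mulmxV // adjmx1 mul1mx -mulmxA mulmxV // mulmx1.
apply/sum_mul_densityE => //.
have /= -> := sum_split_ord (fun K => ktensor K *m v *m adj (ktensor K *m v))
  (fun k => kraus_of_stabilizer (c k) (S k)) N.
under eq_bigr do
  rewrite kraus_of_stabilizer_mul // adjmxZ -scalemxAl -scalemxAr scalerA cc.
rewrite [X in _ + X]big1 => [|q _]; last by rewrite Nann mul0mx.
by rewrite addr0 -scaler_suml -mulr_suml sum_p mul1r invf_div.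
Qed.

End NonemptyParties.

Lemma SEP_transform_iff_decomposition :
  fully_entangled psi -> SEP_transform v w <-> stabilizer_decomposition.
Proof.
move=> FE; have [n0|n_gt0] := posnP n.
  rewrite !ktensor_nil // mul1mx.
  split=> _; first exact: stabilizer_decomposition_nil.
  exact: SEP_transform_refl.
split; first exact: (SEP_transform_decomposition (Ordinal n_gt0)).
exact: (decomposition_SEP_transform (Ordinal n_gt0)).
Qed.

End Decomposition.

Theorem theorem2 (R : realType) (n : nat) (d : 'I_n -> nat)
  (psi : 'cV[R[i]]_(dimH d)) (gl hl : forall j : 'I_n, 'M[R[i]]_(d j)) :
  (forall j, (0 < d j)%N) ->
  psi != 0 ->
  fully_entangled psi ->
  (forall j, gl j \in unitmx) ->
  (forall j, hl j \in unitmx) ->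
  let g := ktensor gl in
  let h := ktensor hl in
  let G := adj g *m g in
  let H := adj h *m h in
  let r := nrm2 (h *m psi) / nrm2 (g *m psi) in
  SEP_transform (g *m psi) (h *m psi) <->
  exists (m : nat) (p : 'I_m -> R[i]) (S : 'I_m -> forall j : 'I_n, 'M[R[i]]_(d j))
         (l : nat) (N : 'I_l -> forall j : 'I_n, 'M[R[i]]_(d j)),
    (forall k, 0 <= p k) /\ \sum_(k < m) p k = 1 /\
    (forall k, in_stabilizer psi (S k)) /\
    (forall q, in_annihilator (g *m psi) (N q)) /\
    r^-1 *: (\sum_(k < m) p k *: (adj (ktensor (S k)) *m H *m ktensor (S k)))
      + adj g *m (\sum_(q < l) adj (ktensor (N q)) *m ktensor (N q)) *m g = G.
Proof.
move=> _ psi0 FE gU hU.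
exact: SEP_transform_iff_decomposition.
Qed.
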